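(* Let $X$ be a proper geodesic metric space and let $g:X\to X$ be an isometry of infinite order such that the cyclic group $\langle g\rangle$ acts properly on $X$. Then $g$ has at most two fixed points on $\partial_M X$.
   Context: A Morse gauge is a function $N:[1,\infty)\times[0,\infty)\to[0,\infty)$; a geodesic $\gamma$ is $N$-Morse if every $(\lambda,\epsilon)$-quasi-geodesic with endpoints on $\gamma$ lies in the $N(\lambda,\epsilon)$-neighborhood of $\gamma$. The Morse boundary $\partial_M X$ is the set of Morse geodesic rays in $X$ modulo finite Hausdorff distance; an isometry $g$ acts on it by $[\alpha]\mapsto[g\circ\alpha]$. *)

From Stdlib Require Import Reals List Lra.
Open Scope R_scope.

Section MetricDefs.
Context {X : Type} (d : X -> X -> R).

Definition is_metric : Prop :=
  (forall x y, d x y = 0 <-> x = y) /\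
  (forall x y, d x y = d y x) /\
  (forall x y z, d x z <= d x y + d y z).

Definition mopen (U : X -> Prop) : Prop :=
  forall x, U x -> exists r, 0 < r /\ forall y, d x y < r -> U y.

Definition mcompact (K : X -> Prop) : Prop :=
  forall (I : Type) (U : I -> X -> Prop),
    (forall i, mopen (U i)) ->
    (forall x, K x -> exists i, U i x) ->
    exists l : list I, forall x, K x -> exists i, In i l /\ U i x.

Definition proper_space : Prop :=
  forall x r, mcompact (fun y => d x y <= r).

(** Geodesic: any two points are joined by a geodesic segment
    c : [0, d x y] -> X (represented as a function on R). *)
Definition geodesic_space : Prop :=
  forall x y, exists c : R -> X,
    c 0 = x /\ c (d x y) = y /\
    forall s t, 0 <= s <= d x y -> 0 <= t <= d x y ->
      d (c s) (c t) = Rabs (s - t).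

Definition geodesic_ray (a : R -> X) : Prop :=
  forall s t, 0 <= s -> 0 <= t -> d (a s) (a t) = Rabs (s - t).

Definition quasi_geodesic (lam eps : R) (q : R -> X) (a b : R) : Prop :=
  a <= b /\
  forall s t, a <= s <= b -> a <= t <= b ->
    / lam * Rabs (s - t) - eps <= d (q s) (q t) /\
    d (q s) (q t) <= lam * Rabs (s - t) + eps.

Definition morse_gauge (N : R -> R -> R) : Prop :=
  forall lam eps, 1 <= lam -> 0 <= eps -> 0 <= N lam eps.

Definition N_Morse_ray (N : R -> R -> R) (a : R -> X) : Prop :=
  forall lam eps (q : R -> X) (s0 s1 u v : R),
    1 <= lam -> 0 <= eps ->
    quasi_geodesic lam eps q s0 s1 ->
    0 <= u -> 0 <= v -> q s0 = a u -> q s1 = a v ->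
    forall t, s0 <= t <= s1 ->
      exists w, 0 <= w /\ d (q t) (a w) <= N lam eps.

Definition Morse_ray (a : R -> X) : Prop :=
  geodesic_ray a /\ exists N, morse_gauge N /\ N_Morse_ray N a.

(** Finite Hausdorff distance between the images of two rays:
    the relation defining points of the Morse boundary. *)
Definition ray_equiv (a b : R -> X) : Prop :=
  exists C, (forall s, 0 <= s -> exists t, 0 <= t /\ d (a s) (b t) <= C) /\
            (forall t, 0 <= t -> exists s, 0 <= s /\ d (a s) (b t) <= C).

Definition isometry (g ginv : X -> X) : Prop :=
  (forall x y, d (g x) (g y) = d x y) /\
  (forall x, g (ginv x) = x) /\ (forall x, ginv (g x) = x).

Definition fixes_boundary_point (g : X -> X) (a : R -> X) : Prop :=
  Morse_ray a /\ ray_equiv (fun t => g (a t)) a.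

End MetricDefs.

Definition gpow {X : Type} (g ginv : X -> X) (n : Z) : X -> X :=
  match n with
  | Z0 => fun x => x
  | Zpos p => Nat.iter (Pos.to_nat p) g
  | Zneg p => Nat.iter (Pos.to_nat p) ginv
  end.

Definition infinite_order {X : Type} (g ginv : X -> X) : Prop :=
  forall n : Z, n <> 0%Z -> exists x, gpow g ginv n x <> x.

Definition cyclic_acts_properly {X : Type} (d : X -> X -> R)
  (g ginv : X -> X) : Prop :=
  forall K : X -> Prop, mcompact d K ->
    exists l : list Z, forall n : Z,
      (exists x, K x /\ K (gpow g ginv n x)) -> In n l.

From Stdlib Require Import Reals List Lra ZArith Lia Classical.
Open Scope R_scope.

(* Suppose three pairwise inequivalent Morse rays [a], [b], [c] represent boundary points
   fixed by an isometry [f].  Each ray [r] eventually fellow-travels [f o r], starting from the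
   parameter [v] at which [r] comes closest to [f (r 0)].  Thin triangles built from two such
   rays and a geodesic from [a 0] to [f (a 0)] show that for two inequivalent rays at most one
   of these parameters is large, and that if both are small then [f] moves the base point by a
   bounded amount.  With three fixed points this bounds the displacement of [a 0] uniformly in
   [f], in particular for all powers of [g]; the orbit of [a 0] then stays in a compact ball,
   which a proper action of [<g>] forbids. *)

Ltac Rabs_cases := repeat match goal with
  | |- context [Rabs ?x] => let H := fresh in destruct (Rcase_abs x) as [H|H];
      [rewrite (Rabs_left x H) | rewrite (Rabs_right x H)]
  | H0 : context [Rabs ?x] |- _ => let H := fresh in destruct (Rcase_abs x) as [H|H];
      [rewrite (Rabs_left x H) in H0 | rewrite (Rabs_right x H) in H0]
  end.

Lemma Rabs_sub_of_le a b : a <= b -> Rabs (a - b) = b - a.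
Proof. intros; rewrite Rabs_minus_sym, Rabs_pos_eq; lra. Qed.

Lemma Rabs_sub_of_ge a b : b <= a -> Rabs (a - b) = a - b.
Proof. intros; rewrite Rabs_pos_eq; lra. Qed.

Lemma Rinv_between_0_1 lam : 1 <= lam -> 0 < / lam <= 1.
Proof.
  intros Hl; split; [apply Rinv_0_lt_compat; lra|].
  rewrite <- Rinv_1; apply Rinv_le_contravar; lra.
Qed.

Lemma continuity_pt_of_nonexpanding (f : R -> R) x :
  (forall a b, Rabs (f a - f b) <= Rabs (a - b)) -> continuity_pt f x.
Proof.
  intros Hf eps Heps; exists eps; split; [lra|].
  intros y [_ Hy]; simpl in *; unfold R_dist in *.
  eapply Rle_lt_trans; [apply Hf | exact Hy].
Qed.

Lemma Rmax3_ub x y z : x <= Rmax x (Rmax y z) /\ y <= Rmax x (Rmax y z) /\ z <= Rmax x (Rmax y z).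
Proof.
  pose proof (Rmax_l x (Rmax y z)); pose proof (Rmax_r x (Rmax y z)).
  pose proof (Rmax_l y z); pose proof (Rmax_r y z); lra.
Qed.

Lemma is_lub_approx (E : R -> Prop) m eps : is_lub E m -> 0 < eps ->
  exists x, E x /\ m - eps < x.
Proof.
  intros [_ Hlub] Heps; apply NNPP; intros Hno.
  assert (Hub : is_upper_bound E (m - eps)).
  { intros x Ex; apply Rnot_lt_le; intros Hlt; apply Hno; exists x; auto. }
  specialize (Hlub _ Hub); lra.
Qed.

Definition clamp (a b t : R) : R := Rmax a (Rmin b t).

Lemma clamp_nonexpanding a b s t : a <= b -> Rabs (clamp a b s - clamp a b t) <= Rabs (s - t).
Proof. intros; unfold clamp, Rmax, Rmin; repeat destruct Rle_dec; Rabs_cases; lra. Qed.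

Lemma clamp_id a b t : a <= t <= b -> clamp a b t = t.
Proof. intros; unfold clamp, Rmax, Rmin; repeat destruct Rle_dec; lra. Qed.

Lemma clamp_between a b t : a <= b -> a <= clamp a b t <= b.
Proof. intros; unfold clamp, Rmax, Rmin; repeat destruct Rle_dec; lra. Qed.

Lemma list_Z_misses_positive (l : list Z) : exists p, ~ In (Zpos p) l.
Proof.
  assert (Hbound : exists m, forall z, In z l -> (z < m)%Z).
  { induction l as [|z l [m Hm]]; [exists 0%Z; intros _ []|].
    exists (Z.max (z + 1) m); intros y [<-|Hy]; [lia | specialize (Hm y Hy); lia]. }
  destruct Hbound as [m Hm]; exists (Z.to_pos (Z.max m 1)); intros Hin.
  specialize (Hm _ Hin); rewrite Z2Pos.id in Hm by lia; lia.
Qed.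

Section MetricSpace.
Variable X : Type.
Variable d : X -> X -> R.
Hypothesis d_metric : is_metric d.

Lemma dist_refl x : d x x = 0.
Proof. apply (proj1 d_metric); reflexivity. Qed.

Lemma dist_sym x y : d x y = d y x.
Proof. apply (proj1 (proj2 d_metric)). Qed.

Lemma dist_triangle x y z : d x z <= d x y + d y z.
Proof. apply (proj2 (proj2 d_metric)). Qed.

Lemma dist_ge0 x y : 0 <= d x y.
Proof. pose proof (dist_triangle x y x); rewrite dist_refl, (dist_sym y x) in H; lra. Qed.

Lemma dist_triangle4 x y z w : d x w <= d x y + d y z + d z w.
Proof. pose proof (dist_triangle x y w); pose proof (dist_triangle y z w); lra. Qed.

Lemma isometry_dist f fi x y : isometry d f fi -> d (f x) (f y) = d x y.
Proof. intros [Hf _]; apply Hf. Qed.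

Lemma displacement_transfer f fi x y : isometry d f fi ->
  d (f y) y <= 2 * d x y + d (f x) x.
Proof.
  intros Hf; pose proof (dist_triangle4 (f y) (f x) x y).
  rewrite (dist_sym (f y) (f x)), (isometry_dist _ _ _ _ Hf) in H; lra.
Qed.

Lemma isometry_inv_dist f fi x y : isometry d f fi -> d (fi x) (fi y) = d x y.
Proof. intros [Hf [Hffi _]]; rewrite <- (Hf (fi x) (fi y)), !Hffi; auto. Qed.

Lemma N_Morse_ray_isometry N r f fi : isometry d f fi -> N_Morse_ray d N r ->
  N_Morse_ray d N (fun t => f (r t)).
Proof.
  intros Hf HM lam eps q s0 s1 u v Hl He [Hs01 Hq] Hu Hv E0 E1 t Ht.
  destruct (HM lam eps (fun t => fi (q t)) s0 s1 u v Hl He) with (t := t) as [w [Hw Hd]]; auto.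
  - split; auto; intros s s' Hs Hs'; rewrite (isometry_inv_dist f fi _ _ Hf); auto.
  - rewrite E0; apply (proj2 (proj2 Hf)).
  - rewrite E1; apply (proj2 (proj2 Hf)).
  - exists w; split; auto.
    rewrite <- (proj1 (proj2 Hf) (q t)), (isometry_dist _ _ _ _ Hf); auto.
Qed.

Lemma N_Morse_ray_mono N N' r : (forall l e, 1 <= l -> 0 <= e -> N l e <= N' l e) ->
  N_Morse_ray d N r -> N_Morse_ray d N' r.
Proof.
  intros HNN' HM lam eps q s0 s1 u v Hl He Hq Hu Hv E0 E1 t Ht.
  destruct (HM lam eps q s0 s1 u v Hl He Hq Hu Hv E0 E1 t Ht) as [w [Hw Hd]].
  exists w; split; auto; specialize (HNN' lam eps Hl He); lra.
Qed.

Lemma Morse_rays_common_gauge a1 a2 a3 : Morse_ray d a1 -> Morse_ray d a2 -> Morse_ray d a3 ->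
  exists N, morse_gauge N /\ N_Morse_ray d N a1 /\ N_Morse_ray d N a2 /\ N_Morse_ray d N a3.
Proof.
  intros [_ [N1 [HN1 M1]]] [_ [N2 [HN2 M2]]] [_ [N3 [HN3 M3]]].
  set (N := fun l e => Rmax (N1 l e) (Rmax (N2 l e) (N3 l e))).
  assert (Hub : forall l e, N1 l e <= N l e /\ N2 l e <= N l e /\ N3 l e <= N l e)
    by (intros; apply Rmax3_ub).
  exists N; repeat split.
  - intros l e Hl He; specialize (HN1 l e Hl He); specialize (Hub l e); lra.
  - revert M1; apply N_Morse_ray_mono; intros l e _ _; apply Hub.
  - revert M2; apply N_Morse_ray_mono; intros l e _ _; apply Hub.
  - revert M3; apply N_Morse_ray_mono; intros l e _ _; apply Hub.
Qed.

Lemma ray_equiv_refl r : ray_equiv d r r.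
Proof. exists 0; split; intros s Hs; exists s; split; auto; rewrite dist_refl; lra. Qed.

Lemma ray_equiv_sym r r' : ray_equiv d r r' -> ray_equiv d r' r.
Proof.
  intros [C [H1 H2]]; exists C; split.
  - intros s Hs; destruct (H2 s Hs) as [t [Ht Hd]]; exists t; rewrite dist_sym; auto.
  - intros t Ht; destruct (H1 t Ht) as [s [Hs Hd]]; exists s; rewrite dist_sym; auto.
Qed.

Lemma ray_equiv_trans r1 r2 r3 : ray_equiv d r1 r2 -> ray_equiv d r2 r3 -> ray_equiv d r1 r3.
Proof.
  intros [C1 [H1 H2]] [C2 [K1 K2]]; exists (C1 + C2); split.
  - intros s Hs; destruct (H1 s Hs) as [t [Ht Hd]]; destruct (K1 t Ht) as [u [Hu Hd']].
    exists u; split; auto; pose proof (dist_triangle (r1 s) (r2 t) (r3 u)); lra.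
  - intros u Hu; destruct (K2 u Hu) as [t [Ht Hd]]; destruct (H2 t Ht) as [s [Hs Hd']].
    exists s; split; auto; pose proof (dist_triangle (r1 s) (r2 t) (r3 u)); lra.
Qed.

Lemma ray_equiv_isometry f fi r r' : isometry d f fi -> ray_equiv d r r' ->
  ray_equiv d (fun t => f (r t)) (fun t => f (r' t)).
Proof.
  intros Hf [C [H1 H2]]; exists C; split.
  - intros s Hs; destruct (H1 s Hs) as [t [Ht Hd]].
    exists t; rewrite (isometry_dist _ _ _ _ Hf); auto.
  - intros t Ht; destruct (H2 t Ht) as [s [Hs Hd]].
    exists s; rewrite (isometry_dist _ _ _ _ Hf); auto.
Qed.

Lemma isometry_iter g ginv k : isometry d g ginv -> isometry d (Nat.iter k g) (Nat.iter k ginv).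
Proof.
  intros [Hg [Hgi Hig]]; split; [|split]; induction k as [|k IH]; intros x; auto.
  - intros y; simpl; rewrite Hg; auto.
  - rewrite (Nat.iter_succ_r k _ ginv x), Nat.iter_succ, IH; auto.
  - rewrite (Nat.iter_succ_r k _ g x), Nat.iter_succ, IH; auto.
Qed.

Lemma ray_equiv_iter g ginv r : isometry d g ginv -> ray_equiv d (fun t => g (r t)) r ->
  forall k, ray_equiv d (fun t => Nat.iter k g (r t)) r.
Proof.
  intros Hg Hfix k; induction k as [|k IH]; [apply ray_equiv_refl|].
  eapply ray_equiv_trans; [|exact Hfix]; apply (ray_equiv_isometry g ginv); auto.
Qed.

Lemma orbit_unbounded_of_proper_action g ginv : proper_space d ->
  cyclic_acts_properly d g ginv -> forall x Rb, ~ (forall k, d (Nat.iter k g x) x <= Rb).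
Proof.
  intros Hp Hpr x Rb Hbdd.
  destruct (Hpr _ (Hp x Rb)) as [l Hl].
  destruct (list_Z_misses_positive l) as [p Hp']; apply Hp', Hl.
  exists x; split; [exact (Hbdd 0%nat)|].
  rewrite dist_sym; apply Hbdd.
Qed.

(** * Geodesic segments and closest points *)

Definition geodesic_segment (c : R -> X) (L : R) : Prop :=
  0 <= L /\ forall s t, 0 <= s <= L -> 0 <= t <= L -> d (c s) (c t) = Rabs (s - t).

Lemma geodesic_segment_exists : geodesic_space d -> forall x y,
  exists c, c 0 = x /\ c (d x y) = y /\ geodesic_segment c (d x y).
Proof.
  intros Hg x y; destruct (Hg x y) as [c [H0 [H1 H2]]].
  exists c; repeat split; auto; apply dist_ge0.
Qed.

Lemma geodesic_segment_restrict c L L' : geodesic_segment c L -> 0 <= L' <= L ->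
  geodesic_segment c L'.
Proof. intros [_ Hc] HL'; split; [lra|]; intros; apply Hc; lra. Qed.

Lemma geodesic_segment_reverse c L : geodesic_segment c L ->
  geodesic_segment (fun t => c (L - t)) L.
Proof.
  intros [HL Hc]; split; auto; intros s t Hs Ht.
  rewrite Hc by lra; rewrite Rabs_minus_sym; f_equal; ring.
Qed.

Lemma geodesic_ray_segment a v L : geodesic_ray d a -> 0 <= v -> 0 <= L ->
  geodesic_segment (fun t => a (v + t)) L.
Proof. intros Ha Hv HL; split; auto; intros; rewrite Ha by lra; f_equal; ring. Qed.

Lemma geodesic_ray_segment_from0 a L : geodesic_ray d a -> 0 <= L -> geodesic_segment a L.
Proof. intros Ha HL; split; auto; intros; apply Ha; lra. Qed.

Lemma geodesic_ray_isometry a f fi : isometry d f fi -> geodesic_ray d a ->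
  geodesic_ray d (fun t => f (a t)).
Proof. intros Hf Ha s t Hs Ht; rewrite (isometry_dist _ _ _ _ Hf); auto. Qed.

Lemma segment_closest_point c L z : geodesic_segment c L ->
  exists w, 0 <= w <= L /\ forall w', 0 <= w' <= L -> d z (c w) <= d z (c w').
Proof.
  intros [HL Hc].
  set (f t := d z (c (clamp 0 L t))).
  assert (Hf : forall s t, Rabs (f s - f t) <= Rabs (s - t)).
  { intros s t; unfold f; apply Rabs_le.
    pose proof (clamp_between 0 L s HL); pose proof (clamp_between 0 L t HL).
    pose proof (clamp_nonexpanding 0 L s t HL).
    pose proof (dist_triangle z (c (clamp 0 L t)) (c (clamp 0 L s))).
    pose proof (dist_triangle z (c (clamp 0 L s)) (c (clamp 0 L t))).
    rewrite (dist_sym (c (clamp 0 L t))), Hc in H2 by auto; rewrite Hc in H3 by auto.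
    split; lra. }
  destruct (continuity_ab_min f 0 L HL (fun x _ => continuity_pt_of_nonexpanding f x Hf))
    as [w [Hmin Hw]].
  exists w; split; auto; intros w' Hw'.
  specialize (Hmin w' Hw'); unfold f in Hmin; rewrite !clamp_id in Hmin by lra; exact Hmin.
Qed.

(* Points beyond parameter [2 d(z, a 0) + 1] are farther from [z] than [a 0]. *)
Lemma ray_closest_point a z : geodesic_ray d a ->
  exists v, 0 <= v /\ forall s, 0 <= s -> d z (a v) <= d z (a s).
Proof.
  intros Ha; set (L := 2 * d z (a 0) + 1).
  assert (HL : 0 <= L) by (pose proof (dist_ge0 z (a 0)); unfold L; lra).
  destruct (segment_closest_point a L z) as [v [Hv Hmin]].
  { split; auto; intros; apply Ha; lra. }
  exists v; split; [lra|]; intros s Hs.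
  destruct (Rle_dec s L) as [HsL|HsL]; [apply Hmin; lra|].
  pose proof (Hmin 0 (conj (Rle_refl 0) HL)).
  pose proof (dist_triangle (a 0) z (a s)); rewrite (Ha 0 s), Rabs_sub_of_le, dist_sym in H0 by lra.
  unfold L in HsL; lra.
Qed.

(** * Quasi-geodesics built from pieces *)

Definition nonexpanding_on (q : R -> X) a b : Prop :=
  forall s t, a <= s <= b -> a <= t <= b -> d (q s) (q t) <= Rabs (s - t).

Definition lower_quasi_on lam eps (q : R -> X) a b : Prop :=
  forall s t, a <= s <= b -> a <= t <= b -> / lam * Rabs (s - t) - eps <= d (q s) (q t).

Lemma quasi_geodesic_of_bounds lam eps q a b : 1 <= lam -> a <= b ->
  nonexpanding_on q a b -> lower_quasi_on lam eps q a b -> 0 <= eps ->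
  quasi_geodesic d lam eps q a b.
Proof.
  intros Hl Hab Hup Hlow He; split; auto; intros s t Hs Ht; split; auto.
  pose proof (Hup s t Hs Ht); pose proof (Rabs_pos (s - t)); nra.
Qed.

Lemma quasi_geodesic_weaken lam eps eps' q a b : eps <= eps' ->
  quasi_geodesic d lam eps q a b -> quasi_geodesic d lam eps' q a b.
Proof. intros He [Hab Hq]; split; auto; intros s t Hs Ht; specialize (Hq s t Hs Ht); lra. Qed.

Lemma quasi_geodesic_ext lam eps q q' a b : (forall t, a <= t <= b -> q t = q' t) ->
  quasi_geodesic d lam eps q a b -> quasi_geodesic d lam eps q' a b.
Proof. intros E [Hab Hq]; split; auto; intros s t Hs Ht; rewrite <- !E by auto; auto. Qed.

Lemma quasi_geodesic_reverse lam eps q a b : quasi_geodesic d lam eps q a b ->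
  quasi_geodesic d lam eps (fun t => q (- t)) (- b) (- a).
Proof.
  intros [Hab Hq]; split; [lra|]; intros s t Hs Ht.
  replace (Rabs (s - t)) with (Rabs (- s - - t)) by (rewrite <- Rabs_Ropp; f_equal; ring).
  apply Hq; lra.
Qed.

Lemma segment_nonexpanding c L : geodesic_segment c L -> nonexpanding_on c 0 L.
Proof. intros [_ Hc] s t Hs Ht; rewrite Hc; auto; lra. Qed.

Lemma segment_lower_quasi lam c L : 1 <= lam -> geodesic_segment c L ->
  lower_quasi_on lam 0 c 0 L.
Proof.
  intros Hl [_ Hc] s t Hs Ht; rewrite Hc by auto.
  pose proof (Rinv_between_0_1 lam Hl); pose proof (Rabs_pos (s - t)); nra.
Qed.

Lemma segment_quasi_geodesic lam c L : 1 <= lam -> geodesic_segment c L ->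
  quasi_geodesic d lam 0 c 0 L.
Proof.
  intros Hl Hc; apply quasi_geodesic_of_bounds; auto using segment_nonexpanding,
    segment_lower_quasi; try lra; apply (proj1 Hc).
Qed.

Definition concat (q1 : R -> X) L1 (q2 : R -> X) (t : R) : X :=
  if Rle_dec t L1 then q1 t else q2 (t - L1).

Lemma concat_left q1 L1 q2 t : t <= L1 -> concat q1 L1 q2 t = q1 t.
Proof. intros; unfold concat; destruct Rle_dec; auto; lra. Qed.

Lemma concat_right q1 L1 q2 t : L1 <= t -> q1 L1 = q2 0 -> concat q1 L1 q2 t = q2 (t - L1).
Proof.
  intros Ht J; unfold concat; destruct Rle_dec; auto.
  replace t with L1 by lra; rewrite J; f_equal; ring.
Qed.

Lemma concat_end q1 L1 q2 L2 : q1 L1 = q2 0 -> 0 <= L2 -> concat q1 L1 q2 (L1 + L2) = q2 L2.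
Proof. intros J HL; rewrite concat_right by (auto; lra); f_equal; ring. Qed.

Lemma concat_nonexpanding q1 L1 q2 L2 : 0 <= L1 -> 0 <= L2 ->
  nonexpanding_on q1 0 L1 -> nonexpanding_on q2 0 L2 -> q1 L1 = q2 0 ->
  nonexpanding_on (concat q1 L1 q2) 0 (L1 + L2).
Proof.
  intros H1 H2 Hq1 Hq2 J.
  assert (Hcross : forall s t, 0 <= s <= L1 -> L1 < t <= L1 + L2 ->
            d (q1 s) (q2 (t - L1)) <= Rabs (s - t)).
  { intros s t Hs Ht; pose proof (dist_triangle (q1 s) (q1 L1) (q2 (t - L1))).
    pose proof (Hq1 s L1 Hs (conj H1 (Rle_refl _))).
    pose proof (Hq2 0 (t - L1) (conj (Rle_refl 0) H2) ltac:(lra)); rewrite <- J in H3.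
    Rabs_cases; lra. }
  intros s t Hs Ht; unfold concat.
  destruct (Rle_dec s L1), (Rle_dec t L1).
  - apply Hq1; lra.
  - apply Hcross; lra.
  - rewrite dist_sym, Rabs_minus_sym; apply Hcross; lra.
  - replace (s - t) with ((s - L1) - (t - L1)) by ring; apply Hq2; lra.
Qed.

Lemma concat_lower_quasi lam eps q1 L1 q2 L2 : 0 <= L1 -> 0 <= L2 ->
  lower_quasi_on lam eps q1 0 L1 -> lower_quasi_on lam eps q2 0 L2 ->
  (forall t1 t2, 0 <= t1 <= L1 -> 0 <= t2 <= L2 ->
     / lam * ((L1 - t1) + t2) - eps <= d (q1 t1) (q2 t2)) ->
  lower_quasi_on lam eps (concat q1 L1 q2) 0 (L1 + L2).
Proof.
  intros H1 H2 Hq1 Hq2 Hcross s t Hs Ht; unfold concat.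
  destruct (Rle_dec s L1), (Rle_dec t L1).
  - apply Hq1; lra.
  - rewrite Rabs_sub_of_le by lra.
    replace (t - s) with ((L1 - s) + (t - L1)) by ring; apply Hcross; lra.
  - rewrite dist_sym, Rabs_sub_of_ge by lra.
    replace (s - t) with ((L1 - t) + (s - L1)) by ring; apply Hcross; lra.
  - replace (s - t) with ((s - L1) - (t - L1)) by ring; apply Hq2; lra.
Qed.

Definition prepend a (x : X) (q : R -> X) (t : R) : X := if Rlt_dec t a then x else q t.
Definition append b (y : X) (q : R -> X) (t : R) : X := if Rle_dec t b then q t else y.

Lemma prepend_left a x q t : t < a -> prepend a x q t = x.
Proof. intros; unfold prepend; destruct Rlt_dec; auto; lra. Qed.

Lemma prepend_right a x q t : a <= t -> prepend a x q t = q t.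
Proof. intros; unfold prepend; destruct Rlt_dec; auto; lra. Qed.

Lemma append_left b y q t : t <= b -> append b y q t = q t.
Proof. intros; unfold append; destruct Rle_dec; auto; lra. Qed.

Lemma append_right b y q t : b < t -> append b y q t = y.
Proof. intros; unfold append; destruct Rle_dec; auto; lra. Qed.

Lemma quasi_geodesic_prepend lam eps q a b x J : 1 <= lam -> 0 <= eps ->
  quasi_geodesic d lam eps q a b -> d x (q a) <= J ->
  quasi_geodesic d lam (eps + J + 1) (prepend a x q) (a - 1) b.
Proof.
  intros Hl He [Hab Hq] HJ; split; [lra|].
  pose proof (Rinv_between_0_1 lam Hl) as Hil.
  assert (Hcross : forall s t, a - 1 <= s < a -> a <= t <= b ->
            / lam * Rabs (s - t) - (eps + J + 1) <= d x (q t) /\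
            d x (q t) <= lam * Rabs (s - t) + (eps + J + 1)).
  { intros s t Hs Ht; destruct (Hq a t (conj (Rle_refl a) Hab) Ht) as [Hlow Hup].
    pose proof (dist_triangle x (q a) (q t)); pose proof (dist_triangle (q a) x (q t)).
    rewrite (dist_sym (q a) x) in H0.
    rewrite Rabs_sub_of_le by lra; rewrite Rabs_sub_of_le in Hlow, Hup by lra.
    assert (/ lam * (t - s) <= / lam * (t - a) + 1) by nra.
    assert (lam * (t - a) <= lam * (t - s)) by nra.
    split; lra. }
  intros s t Hs Ht; unfold prepend.
  destruct (Rlt_dec s a), (Rlt_dec t a).
  - rewrite dist_refl; assert (Rabs (s - t) <= 1) by (Rabs_cases; lra).
    pose proof (Rabs_pos (s - t)); pose proof (dist_ge0 x (q a)); split; nra.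
  - apply Hcross; lra.
  - rewrite dist_sym, Rabs_minus_sym; apply Hcross; lra.
  - pose proof (dist_ge0 x (q a)); specialize (Hq s t ltac:(lra) ltac:(lra)); lra.
Qed.

(* [append b y q] is [prepend] read backwards. *)
Lemma quasi_geodesic_append lam eps q a b y J : 1 <= lam -> 0 <= eps ->
  quasi_geodesic d lam eps q a b -> d (q b) y <= J ->
  quasi_geodesic d lam (eps + J + 1) (append b y q) a (b + 1).
Proof.
  intros Hl He Hq HJ.
  assert (HJ' : d y ((fun s => q (- s)) (- b)) <= J) by (rewrite Ropp_involutive, dist_sym; auto).
  pose proof (quasi_geodesic_reverse _ _ _ _ _
    (quasi_geodesic_prepend _ _ _ _ _ _ _ Hl He (quasi_geodesic_reverse _ _ _ _ _ Hq) HJ')) as Hp.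
  rewrite Ropp_involutive in Hp; replace (- (- b - 1)) with (b + 1) in Hp by ring.
  revert Hp; apply quasi_geodesic_ext; intros t _.
  unfold prepend, append; destruct Rlt_dec, Rle_dec; rewrite ?Ropp_involutive; auto; lra.
Qed.

(* [d (c w') (e r)] is at least [r], as [c w] is closest to [z], and at least [|w' - w| - r]. *)
Lemma projection_junction (c e : R -> X) (P : R -> Prop) w z h :
  P w -> (forall w', P w' -> d z (c w) <= d z (c w')) ->
  (forall w', P w' -> d (c w') (c w) = Rabs (w' - w)) ->
  geodesic_segment e h -> e 0 = c w -> e h = z ->
  forall w' r, P w' -> 0 <= r <= h -> / 3 * (Rabs (w' - w) + r) <= d (c w') (e r).
Proof.
  intros Pw Hmin Hc [Hh He] E0 Eh w' r Pw' Hr.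
  assert (Hzr : d z (e r) = h - r) by (rewrite <- Eh, He by lra; Rabs_cases; lra).
  assert (Hzw : d z (c w) = h) by (rewrite <- Eh, <- E0, He by lra; Rabs_cases; lra).
  assert (Hwr : d (c w) (e r) = r) by (rewrite <- E0, He by lra; Rabs_cases; lra).
  pose proof (Hmin w' Pw'); pose proof (dist_triangle z (e r) (c w')).
  pose proof (dist_triangle (c w') (e r) (c w)); rewrite (Hc w' Pw') in H1.
  rewrite (dist_sym (e r) (c w')) in H0; rewrite (dist_sym (e r) (c w)) in H1; lra.
Qed.

(* The middle piece is long compared with the two projection segments, which keeps the
   endpoints of the outer pieces apart. *)
Lemma detour_quasi_geodesic (al c1 c3 : R -> X) v U h0 h1 :
  geodesic_ray d al -> 0 <= v ->
  geodesic_segment c1 h0 -> c1 h0 = al v ->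
  (forall s, 0 <= s -> d (c1 0) (al v) <= d (c1 0) (al s)) ->
  geodesic_segment c3 h1 -> c3 0 = al U ->
  (forall s, 0 <= s -> d (c3 h1) (al U) <= d (c3 h1) (al s)) ->
  2 * (h0 + h1) <= U - v ->
  quasi_geodesic d 3 0 (concat (concat c1 h0 (fun t => al (v + t))) (h0 + (U - v)) c3)
    0 (h0 + (U - v) + h1).
Proof.
  intros Hal Hv Hc1 E1 Hmin1 Hc3 E3 Hmin3 Hlong.
  pose proof (proj1 Hc1) as Hh0; pose proof (proj1 Hc3) as Hh1.
  assert (HU : v <= U) by lra.
  set (L := U - v) in *.
  assert (Hseg : geodesic_segment (fun t => al (v + t)) L)
    by (apply geodesic_ray_segment; auto; lra).
  assert (J1 : c1 h0 = al (v + 0)) by (rewrite Rplus_0_r; auto).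
  assert (J2 : concat c1 h0 (fun t => al (v + t)) (h0 + L) = c3 0).
  { rewrite concat_end, E3 by (auto; lra); unfold L; f_equal; ring. }
  apply quasi_geodesic_of_bounds; try lra.
  - apply concat_nonexpanding; try lra; auto using segment_nonexpanding.
    apply concat_nonexpanding; try lra; auto using segment_nonexpanding.
  - apply concat_lower_quasi; try lra; [| apply segment_lower_quasi; auto; lra |].
    + apply concat_lower_quasi; try lra; try (apply segment_lower_quasi; auto; lra).
      intros t1 t2 Ht1 Ht2.
      assert (E0 : c1 (h0 - 0) = al v) by (rewrite Rminus_0_r; auto).
      assert (Eh : c1 (h0 - h0) = c1 0) by (f_equal; ring).
      pose proof (projection_junction al (fun r => c1 (h0 - r)) (fun s => 0 <= s) v (c1 0) h0
        Hv Hmin1 (fun w' H => Hal w' v H Hv) (geodesic_segment_reverse _ _ Hc1) E0 Eh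
        (v + t2) (h0 - t1) ltac:(lra) ltac:(lra)) as Hj.
      cbv beta in Hj; replace (h0 - (h0 - t1)) with t1 in Hj by ring.
      rewrite Rabs_sub_of_ge, dist_sym in Hj by lra; lra.
    + intros t t3 Ht Ht3.
      destruct (Rle_dec t h0) as [Hth|Hth].
      * rewrite concat_left by auto.
        destruct Hc1 as [_ Hd1], Hc3 as [_ Hd3].
        assert (d (al v) (c1 t) = h0 - t) by (rewrite <- E1, Hd1 by lra; Rabs_cases; lra).
        assert (d (c3 t3) (al U) = t3) by (rewrite <- E3, Hd3 by lra; Rabs_cases; lra).
        pose proof (dist_triangle4 (al v) (c1 t) (c3 t3) (al U)).
        rewrite (Hal v U) in H1 by lra; unfold L in *; Rabs_cases; lra.
      * rewrite concat_right by (auto; lra).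
        pose proof (projection_junction al c3 (fun s => 0 <= s) U (c3 h1) h1
          ltac:(lra) Hmin3 (fun w' H => Hal w' U H ltac:(lra)) Hc3 E3 eq_refl
          (v + (t - h0)) t3 ltac:(lra) ltac:(lra)) as Hj.
        rewrite Rabs_sub_of_le in Hj by (unfold L in *; lra); unfold L in *; lra.
Qed.

Lemma projection_of_far_point (al be : R -> X) C s' :
  geodesic_ray d al -> geodesic_ray d be -> 0 <= s' ->
  (forall t, 0 <= t -> exists s, 0 <= s /\ d (al s) (be t) <= C) ->
  exists U, 0 <= U /\ (forall s, 0 <= s -> d (be s') (al U) <= d (be s') (al s)) /\
    d (be s') (al U) <= C /\ s' - d (al 0) (be 0) - C <= U.
Proof.
  intros Hal Hbe Hs' Hclose.
  destruct (ray_closest_point al (be s') Hal) as [U [HU Hmin]].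
  destruct (Hclose s' Hs') as [s [Hs Hds]].
  pose proof (Hmin s Hs); rewrite dist_sym in Hds.
  exists U; repeat split; auto; [lra|].
  pose proof (dist_triangle4 (be 0) (al 0) (al U) (be s')).
  rewrite (Hbe 0 s'), (Hal 0 U), dist_sym, (dist_sym (al U)) in H0 by lra.
  Rabs_cases; lra.
Qed.

Lemma segment_then_projection_quasi_geodesic (c e : R -> X) L h z :
  geodesic_segment c L -> geodesic_segment e h -> c L = e 0 -> e h = z ->
  (forall w, 0 <= w <= L -> d z (c L) <= d z (c w)) ->
  quasi_geodesic d 3 0 (concat c L e) 0 (L + h).
Proof.
  intros Hc He J Eh Hmin; pose proof (proj1 Hc); pose proof (proj1 He).
  apply quasi_geodesic_of_bounds; try lra.
  - apply concat_nonexpanding; auto using segment_nonexpanding.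
  - apply concat_lower_quasi; try (apply segment_lower_quasi; auto; lra); auto.
    intros t1 t2 Ht1 Ht2.
    pose proof (projection_junction c e (fun w => 0 <= w <= L) L z h ltac:(lra) Hmin
      (fun w' H => proj2 Hc w' L H ltac:(lra)) He (eq_sym J) Eh t1 t2 Ht1 Ht2) as Hj.
    rewrite Rabs_sub_of_le in Hj by lra; lra.
Qed.

(** * Morse rays and tracking *)

(* Take [t1] nearly maximal among parameters whose near point on [G] comes before [G s]; a
   little after [t1] the near points lie beyond [G s], and [P] moves only boundedly meanwhile. *)
Lemma ray_near_path (G P : R -> X) lam eps a b n s0 s1 :
  geodesic_ray d G -> 0 <= lam -> quasi_geodesic d lam eps P a b ->
  (forall t, a <= t <= b -> exists w, 0 <= w /\ d (P t) (G w) <= n) ->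
  P a = G s0 -> P b = G s1 -> 0 <= s0 ->
  forall s, s0 <= s <= s1 -> exists t, a <= t <= b /\ d (G s) (P t) <= 3 * n + lam + eps.
Proof.
  intros HG Hlam [Hab Hq] Hnear Pa Pb Hs0 s Hs.
  assert (Heps : 0 <= eps).
  { destruct (Hq a a) as [_ H]; try lra.
    rewrite dist_refl, Rminus_diag, Rabs_R0 in H; lra. }
  assert (Hn : 0 <= n).
  { destruct (Hnear a) as [w [_ Hw]]; [lra|]; pose proof (dist_ge0 (P a) (G w)); lra. }
  set (S t := a <= t <= b /\ exists w, 0 <= w <= s /\ d (P t) (G w) <= n).
  assert (Sa : S a) by (split; [lra|]; exists s0; rewrite Pa, dist_refl; split; lra).
  destruct (completeness S) as [ts Hts].
  { exists b; intros t [Ht _]; lra. }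
  { exists a; auto. }
  assert (Hts_ab : a <= ts <= b) by (split; [apply Hts | apply Hts; intros t [Ht _]]; auto; lra).
  destruct (is_lub_approx S ts (1/2) Hts ltac:(lra)) as [t1 [St1 Ht1]].
  assert (Ht1ts : t1 <= ts) by (apply Hts; auto).
  destruct St1 as [Ht1ab [w1 [Hw1 Hd1]]].
  set (t2 := Rmin (ts + 1/2) b).
  assert (Ht2 : ts <= t2 <= ts + 1/2 /\ t2 <= b) by (unfold t2, Rmin; destruct Rle_dec; lra).
  destruct (classic (S t2)) as [St2 | HS2].
  - (* then [t2 <= ts], so [t2 = b] and [G s] lies between [G w] and [G s1 = P b] *)
    assert (Eb : t2 = b) by (assert (t2 <= ts) by (apply Hts; auto); unfold t2, Rmin in *;
      destruct Rle_dec; lra).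
    destruct St2 as [_ [w [Hw Hdw]]]; rewrite Eb, Pb, HG in Hdw by lra.
    exists b; split; [lra|]; rewrite Pb, HG by lra; Rabs_cases; lra.
  - destruct (Hnear t2) as [w2 [Hw2 Hd2]]; [lra|].
    assert (Hsw2 : s < w2).
    { apply Rnot_le_lt; intros Hle; apply HS2; split; [lra|]; exists w2; split; auto; lra. }
    assert (Hstep : d (P t1) (P t2) <= lam + eps).
    { destruct (Hq t1 t2) as [_ Hup]; try lra.
      assert (Rabs (t1 - t2) <= 1) by (Rabs_cases; lra); nra. }
    pose proof (dist_triangle4 (G w1) (P t1) (P t2) (G w2)) as T1.
    pose proof (dist_triangle (G s) (G w1) (P t1)) as T2.
    rewrite (dist_sym (G w1) (P t1)), HG in T1, T2 by lra.
    exists t1; split; [lra|]; Rabs_cases; lra.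
Qed.

Lemma segment_near_Morse_ray N (c be : R -> X) T J1 J2 tau :
  N_Morse_ray d N be -> geodesic_segment c T -> 0 <= tau ->
  d (be 0) (c 0) <= J1 -> d (c T) (be tau) <= J2 ->
  forall t, 0 <= t <= T -> exists w, 0 <= w /\ d (c t) (be w) <= N 1 (J1 + J2 + 2).
Proof.
  intros HM Hc Htau HJ1 HJ2 t Ht.
  pose proof (proj1 Hc) as HT; pose proof (dist_ge0 (be 0) (c 0)) as HJ1'.
  pose proof (quasi_geodesic_prepend _ _ _ _ _ _ _ (Rle_refl 1) (Rle_refl 0)
    (segment_quasi_geodesic 1 c T (Rle_refl 1) Hc) HJ1) as Hpre.
  assert (HJ2' : d (prepend 0 (be 0) c T) (be tau) <= J2) by (rewrite prepend_right; auto).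
  pose proof (quasi_geodesic_append 1 (0 + J1 + 1) _ _ _ _ _ (Rle_refl 1) ltac:(lra) Hpre HJ2')
    as Hq.
  apply (quasi_geodesic_weaken _ _ (J1 + J2 + 2)) in Hq; [|lra].
  destruct (HM 1 (J1 + J2 + 2) (append T (be tau) (prepend 0 (be 0) c)) (0 - 1) (T + 1) 0 tau)
    with (t := t) as [w [Hw Hd]]; try exact Hq; try lra.
  - pose proof (dist_ge0 (c T) (be tau)); lra.
  - rewrite append_left, prepend_left by lra; auto.
  - rewrite append_right by lra; auto.
  - rewrite append_left, prepend_right in Hd by lra; eauto.
Qed.

Lemma ray_equiv_of_near N (al be : R -> X) rho :
  N_Morse_ray d N be -> geodesic_ray d al -> geodesic_ray d be ->
  (forall t, 0 <= t -> exists w, 0 <= w /\ d (be t) (al w) <= rho) -> ray_equiv d al be.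
Proof.
  intros HM Hal Hbe Hnear.
  assert (Hrho : 0 <= rho).
  { destruct (Hnear 0) as [w [_ H]]; [lra|]; pose proof (dist_ge0 (be 0) (al w)); lra. }
  set (D := d (be 0) (al 0)).
  assert (HD : 0 <= D) by apply dist_ge0.
  exists (Rmax rho (N 1 (D + rho + 2))); split.
  - intros s Hs.
    destruct (Hnear (s + D + rho)) as [w [Hw Hdw]]; [lra|].
    assert (Hsw : s <= w).
    { pose proof (dist_triangle4 (be 0) (al 0) (al w) (be (s + D + rho))).
      rewrite Hal, Hbe, (dist_sym (al w)) in H by lra; fold D in H; Rabs_cases; lra. }
    destruct (segment_near_Morse_ray N al be w D rho (s + D + rho) HM
      (geodesic_ray_segment_from0 al w Hal Hw) ltac:(lra) (Rle_refl D)
      ltac:(rewrite dist_sym; auto) s ltac:(lra)) as [t [Ht Hd]].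
    exists t; split; auto; eapply Rle_trans; [exact Hd | apply Rmax_r].
  - intros t Ht; destruct (Hnear t Ht) as [w [Hw Hd]]; exists w; split; auto.
    rewrite dist_sym; eapply Rle_trans; [exact Hd | apply Rmax_l].
Qed.

Lemma far_point_of_not_ray_equiv N (al be : R -> X) :
  N_Morse_ray d N be -> geodesic_ray d al -> geodesic_ray d be -> ~ ray_equiv d al be ->
  forall rho, exists t0, 0 <= t0 /\ forall w, 0 <= w -> rho < d (be t0) (al w).
Proof.
  intros HM Hal Hbe Hne rho; apply NNPP; intros Hfar; apply Hne.
  apply (ray_equiv_of_near N al be rho HM Hal Hbe); intros t Ht.
  apply NNPP; intros Hnot; apply Hfar; exists t; split; auto.
  intros w Hw; apply Rnot_le_lt; intros Hle; apply Hnot; exists w; auto.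
Qed.

Definition tracks_from_projection K (r r' : R -> X) v : Prop :=
  0 <= v /\ (forall s, 0 <= s -> d (r' 0) (r v) <= d (r' 0) (r s)) /\
  (forall u, v <= u -> exists tau, 0 <= tau /\ d (r u) (r' tau) <= K).

(* Compare the points [a s], [a v], [a (2 v - s)] with their close partners on [A]. *)
Lemma tracking_starts_soon_after_near_point K (a A : R -> X) v :
  geodesic_ray d a -> geodesic_ray d A -> tracks_from_projection K a A v ->
  forall rho s tau, 0 <= s <= v -> 0 <= tau -> d (a s) (A tau) <= rho ->
  v - s <= 2 * rho + 4 * K.
Proof.
  intros Ha HA [Hv [Hmin Htrack]] rho s tau Hs Htau Hd.
  destruct (Htrack v (Rle_refl v)) as [ta [Hta Hdta]].
  destruct (Htrack (2 * v - s)) as [tu [Htu Hdtu]]; [lra|].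
  set (h := d (A 0) (a v)) in Hmin.
  assert (Hta_h : Rabs (ta - h) <= K).
  { pose proof (dist_triangle (A 0) (A ta) (a v)); pose proof (dist_triangle (A 0) (a v) (A ta)).
    rewrite HA, (dist_sym (A ta)) in H by lra; rewrite HA in H0 by lra; fold h in H, H0.
    Rabs_cases; lra. }
  assert (Hs_h : h <= tau + rho).
  { pose proof (dist_triangle (A 0) (A tau) (a s)); rewrite HA, (dist_sym (A tau)) in H by lra.
    pose proof (Hmin s (proj1 Hs)); Rabs_cases; lra. }
  assert (Hvs : v - s <= K + Rabs (ta - tau) + rho).
  { pose proof (dist_triangle4 (a v) (A ta) (A tau) (a s)).
    rewrite Ha, HA, (dist_sym (A tau)) in H by lra; Rabs_cases; lra. }
  destruct (Rle_dec tau ta); [Rabs_cases; lra|].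
  assert (Htu_h : h - K <= tu).
  { pose proof (dist_triangle (A 0) (A tu) (a (2 * v - s))).
    rewrite HA, (dist_sym (A tu)) in H by lra.
    pose proof (Hmin (2 * v - s) ltac:(lra)); Rabs_cases; lra. }
  assert (Htu_ta : v - s - 2 * K <= Rabs (tu - ta) <= v - s + 2 * K).
  { pose proof (dist_triangle4 (a (2 * v - s)) (A tu) (A ta) (a v)).
    pose proof (dist_triangle4 (A tu) (a (2 * v - s)) (a v) (A ta)).
    rewrite Ha, HA, (dist_sym (A ta)) in H by lra; rewrite Ha, HA, (dist_sym (A tu)) in H0 by lra.
    Rabs_cases; lra. }
  assert (Htau_ta : Rabs (tau - ta) <= v - s + rho + K).
  { pose proof (dist_triangle4 (A tau) (a s) (a v) (A ta)).
    rewrite HA, Ha, (dist_sym (A tau)) in H by lra; Rabs_cases; lra. }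
  assert (Htu_tau : 2 * (v - s) - K - rho <= Rabs (tu - tau)).
  { pose proof (dist_triangle4 (a (2 * v - s)) (A tu) (A tau) (a s)).
    rewrite Ha, HA, (dist_sym (A tau)) in H by lra; Rabs_cases; lra. }
  Rabs_cases; lra.
Qed.

Section Geodesic.
Hypothesis X_geodesic : geodesic_space d.

(* Project a far point [be s'] back onto [al]: the path from [be 0] to its projection, along
   [al], and on to [be s'] is a quasi-geodesic with endpoints on the Morse ray [be]. *)
Lemma fellow_travel_beyond_projection N (al be : R -> X) v :
  N_Morse_ray d N be -> geodesic_ray d al -> geodesic_ray d be -> ray_equiv d al be ->
  0 <= v -> (forall s, 0 <= s -> d (be 0) (al v) <= d (be 0) (al s)) ->
  forall u, v <= u -> exists tau, 0 <= tau /\ d (al u) (be tau) <= N 3 0.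
Proof.
  intros HM Hal Hbe [C [_ Hclose]] Hv Hmin u Hu.
  set (h0 := d (be 0) (al v)).
  assert (Hh0 : 0 <= h0) by apply dist_ge0.
  assert (HC : 0 <= C).
  { destruct (Hclose 0 (Rle_refl 0)) as [s [_ Hs]]; pose proof (dist_ge0 (al s) (be 0)); lra. }
  set (s' := u + 2 * h0 + 3 * C + d (al 0) (be 0) + 1).
  assert (Hs' : 0 <= s') by (pose proof (dist_ge0 (al 0) (be 0)); unfold s'; lra).
  destruct (projection_of_far_point al be C s' Hal Hbe Hs' Hclose) as [U [HU [HminU [Hh1 HUs]]]].
  destruct (geodesic_segment_exists X_geodesic (be 0) (al v)) as [c1 [c10 [c1e Hc1]]].
  destruct (geodesic_segment_exists X_geodesic (al U) (be s')) as [c3 [c30 [c3e Hc3]]].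
  fold h0 in c1e, Hc1; set (h1 := d (al U) (be s')) in c3e, Hc3.
  assert (Hmin1 : forall s, 0 <= s -> d (c1 0) (al v) <= d (c1 0) (al s)) by (rewrite c10; auto).
  assert (Hmin3 : forall s, 0 <= s -> d (c3 h1) (al U) <= d (c3 h1) (al s)) by (rewrite c3e; auto).
  assert (Hlong : 2 * (h0 + h1) <= U - v)
    by (unfold h1, s' in *; rewrite dist_sym in Hh1; lra).
  pose proof (detour_quasi_geodesic al c1 c3 v U h0 h1 Hal Hv Hc1 c1e Hmin1 Hc3 c30 Hmin3 Hlong)
    as Hq.
  assert (HuU : u <= U) by (unfold s' in HUs; lra).
  pose proof (proj1 Hc3) as Hh1'.
  destruct (HM 3 0 _ 0 (h0 + (U - v) + h1) 0 s' ltac:(lra) ltac:(lra) Hq ltac:(lra) Hs')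
    with (t := h0 + (u - v)) as [w [Hw Hdw]]; [| | lra |].
  - rewrite !concat_left by lra; auto.
  - rewrite concat_end; [exact c3e | | exact Hh1'].
    rewrite concat_end, c30 by (rewrite ?Rplus_0_r; auto; lra); f_equal; ring.
  - exists w; split; auto.
    rewrite concat_left, concat_right in Hdw by (rewrite ?Rplus_0_r; auto; lra).
    replace (v + (h0 + (u - v) - h0)) with u in Hdw by ring; exact Hdw.
Qed.

Lemma tracks_from_projection_exists N (r r' : R -> X) :
  N_Morse_ray d N r' -> geodesic_ray d r -> geodesic_ray d r' -> ray_equiv d r r' ->
  exists v, tracks_from_projection (N 3 0) r r' v.
Proof.
  intros HM Hr Hr' He.
  destruct (ray_closest_point r (r' 0) Hr) as [v [Hv Hmin]].
  exists v; repeat split; auto; apply (fellow_travel_beyond_projection N r r'); auto.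
Qed.

Lemma tracks_from_projection_of_fixed N (r : R -> X) f fi :
  N_Morse_ray d N r -> geodesic_ray d r -> isometry d f fi ->
  ray_equiv d (fun t => f (r t)) r ->
  exists v, tracks_from_projection (N 3 0) r (fun t => f (r t)) v.
Proof.
  intros HM Hr Hf Hfix; apply tracks_from_projection_exists;
    [apply (N_Morse_ray_isometry N r f fi) | | apply (geodesic_ray_isometry r f fi)
    | apply ray_equiv_sym]; auto.
Qed.

Section MorseGauge.
Variable N : R -> R -> R.
Hypothesis N_gauge : morse_gauge N.

Definition near_segment_bound D := 3 * N 3 (D + 1) + 2 * D + 4.
Definition near_ray_bound D K := 3 * N 3 (D + 1) + D + 4 + N 3 (D + K + 2).

Lemma near_segment_bound_ge0 D : 0 <= D -> 0 <= near_segment_bound D.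
Proof.
  intros; pose proof (N_gauge 3 (D + 1) ltac:(lra) ltac:(lra)); unfold near_segment_bound; lra.
Qed.

Lemma near_ray_bound_ge0 D K : 0 <= D -> 0 <= K -> 0 <= near_ray_bound D K.
Proof.
  intros; pose proof (N_gauge 3 (D + 1) ltac:(lra) ltac:(lra)).
  pose proof (N_gauge 3 (D + K + 2) ltac:(lra) ltac:(lra)).
  unfold near_ray_bound; lra.
Qed.

Lemma projection_segment_near_Morse_ray (B sig e : R -> X) Ls om h z tB K D :
  N_Morse_ray d N B -> geodesic_segment sig Ls -> 0 <= om <= Ls ->
  (forall w, 0 <= w <= Ls -> d z (sig om) <= d z (sig w)) ->
  geodesic_segment e h -> e 0 = sig om -> e h = z ->
  0 <= tB -> d z (B tB) <= K -> d (B 0) (sig Ls) <= D ->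
  forall r, 0 <= r <= h -> exists w, 0 <= w /\ d (e r) (B w) <= N 3 (D + K + 2).
Proof.
  intros HB Hsig Hom Hmin He E0 Eh HtB HK HD r Hr.
  pose proof (proj1 He) as Hh; pose proof (dist_ge0 (B 0) (sig Ls)) as HD0.
  set (sr := fun t => sig (Ls - t)).
  assert (Hsr : geodesic_segment sr (Ls - om))
    by (apply (geodesic_segment_restrict _ Ls); [apply geodesic_segment_reverse|]; auto; lra).
  assert (J : sr (Ls - om) = e 0) by (unfold sr; rewrite E0; f_equal; ring).
  pose proof (segment_then_projection_quasi_geodesic sr e (Ls - om) h z Hsr He J Eh
    ltac:(intros w Hw; rewrite J, E0; unfold sr; apply Hmin; lra)) as Hq.
  apply (quasi_geodesic_prepend _ _ _ _ _ (B 0) D) in Hq; try lra;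
    [| rewrite concat_left by lra; unfold sr; rewrite Rminus_0_r; auto].
  apply (quasi_geodesic_append _ _ _ _ _ (B tB) K) in Hq; try lra;
    [| rewrite prepend_right, concat_end, Eh by (auto; lra); auto].
  apply (quasi_geodesic_weaken _ _ (D + K + 2)) in Hq; [|lra].
  destruct (HB 3 (D + K + 2) (append (Ls - om + h) (B tB) (prepend 0 (B 0) (concat sr (Ls - om) e)))
    (0 - 1) (Ls - om + h + 1) 0 tB) with (t := Ls - om + r) as [w [Hw Hdw]];
    try exact Hq; try lra.
  - pose proof (dist_ge0 (e h) (B tB)); rewrite Eh in H; lra.
  - rewrite append_left, prepend_left by lra; auto.
  - rewrite append_right by lra; auto.
  - exists w; split; auto.
    rewrite append_left, prepend_right, concat_right in Hdw by (auto; lra).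
    replace (Ls - om + r - (Ls - om)) with r in Hdw by ring; exact Hdw.
Qed.

(* Project [G sv] onto [sig]; the path from [G 0] along [sig] and then to [G sv] is a
   quasi-geodesic, so it passes near every [G s].  Near points on its last piece are in
   turn near [B], by [projection_segment_near_Morse_ray]. *)
Lemma thin_triangle (G B sig : R -> X) Ls sv tB K D :
  N_Morse_ray d N G -> N_Morse_ray d N B -> geodesic_ray d G -> geodesic_segment sig Ls ->
  0 <= sv -> 0 <= tB -> d (G sv) (B tB) <= K ->
  d (G 0) (sig 0) <= D -> d (B 0) (sig Ls) <= D ->
  forall s, 0 <= s <= sv ->
  (exists om, 0 <= om <= Ls /\ d (G s) (sig om) <= near_segment_bound D) \/
  (exists tau, 0 <= tau /\ d (G s) (B tau) <= near_ray_bound D K).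
Proof.
  intros HMG HMB HG Hsig Hsv HtB HK HD1 HD2 s Hs.
  pose proof (dist_ge0 (G 0) (sig 0)) as HD.
  destruct (segment_closest_point sig Ls (G sv) Hsig) as [om [Hom Hmin]].
  destruct (geodesic_segment_exists X_geodesic (sig om) (G sv)) as [e [E0 [Eh He]]].
  set (h := d (sig om) (G sv)) in Eh, He; pose proof (proj1 He) as Hh.
  pose proof (segment_then_projection_quasi_geodesic sig e om h (G sv)
    ltac:(apply (geodesic_segment_restrict _ Ls); auto; lra) He (eq_sym E0) Eh
    ltac:(intros; apply Hmin; lra)) as Hq.
  apply (quasi_geodesic_prepend _ _ _ _ _ (G 0) D) in Hq; try lra;
    [| rewrite concat_left by lra; auto].
  apply (quasi_geodesic_weaken _ _ (D + 1)) in Hq; [|lra].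
  destruct (ray_near_path G _ 3 (D + 1) (0 - 1) (om + h) (N 3 (D + 1)) 0 sv HG ltac:(lra) Hq)
    with (s := s) as [t [Ht Hdt]]; try lra.
  - intros t Ht; apply (HMG 3 (D + 1) _ (0 - 1) (om + h) 0 sv); auto; try lra.
    + rewrite prepend_left by lra; auto.
    + rewrite prepend_right, concat_end by (auto; lra); auto.
  - rewrite prepend_left by lra; auto.
  - rewrite prepend_right, concat_end by (auto; lra); auto.
  - unfold near_segment_bound, near_ray_bound.
    destruct (Rlt_dec t 0); [|destruct (Rle_dec t om)].
    + left; exists 0; split; [lra|]; rewrite prepend_left in Hdt by lra.
      pose proof (dist_triangle (G s) (G 0) (sig 0)); lra.
    + left; exists t; split; [lra|]; rewrite prepend_right, concat_left in Hdt by lra; lra.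
    + right; rewrite prepend_right, concat_right in Hdt by (auto; lra).
      destruct (projection_segment_near_Morse_ray B sig e Ls om h (G sv) tB K D HMB Hsig Hom
        Hmin He E0 Eh HtB HK HD2 (t - om) ltac:(lra)) as [w [Hw Hdw]].
      exists w; split; auto; pose proof (dist_triangle (G s) (e (t - om)) (B w)); lra.
Qed.

Lemma ray_near_segment_before_tracking (G B sig : R -> X) Ls v D s :
  N_Morse_ray d N G -> N_Morse_ray d N B -> geodesic_ray d G -> geodesic_ray d B ->
  tracks_from_projection (N 3 0) G B v -> geodesic_segment sig Ls ->
  d (G 0) (sig 0) <= D -> d (B 0) (sig Ls) <= D -> 0 <= s ->
  2 * near_ray_bound D (N 3 0) + 4 * N 3 0 < v - s ->
  exists om, 0 <= om <= Ls /\ d (G s) (sig om) <= near_segment_bound D.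
Proof.
  intros HMG HMB HG HB Htr Hsig HD1 HD2 Hs Hvs.
  pose proof (near_ray_bound_ge0 D (N 3 0)
    ltac:(pose proof (dist_ge0 (G 0) (sig 0)); lra) ltac:(apply N_gauge; lra)).
  pose proof (N_gauge 3 0 ltac:(lra) (Rle_refl 0)).
  destruct (proj2 (proj2 Htr) v (Rle_refl v)) as [tv [Htv Hdv]].
  destruct (thin_triangle G B sig Ls v tv (N 3 0) D HMG HMB HG Hsig (proj1 Htr) Htv Hdv HD1 HD2 s)
    as [Hnear | [tau [Htau Hd]]]; auto; [lra|].
  pose proof (tracking_starts_soon_after_near_point _ G B v HG HB Htr _ s tau ltac:(lra) Htau Hd).
  lra.
Qed.

(** * Three fixed points *)

Definition tracking_bound D t0 :=
  t0 + D + near_segment_bound D + 2 * near_ray_bound D (N 3 0) + 4 * N 3 0.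

(* If both tracking parameters were large, [b t0] would be near the segment [a 0, f (a 0)],
   and that segment point would in turn be near [a]: impossible for a far point [b t0]. *)
Lemma pair_tracking_start_bounded (a b : R -> X) :
  N_Morse_ray d N a -> N_Morse_ray d N b -> geodesic_ray d a -> geodesic_ray d b ->
  ~ ray_equiv d a b ->
  exists V, forall f fi va vb, isometry d f fi ->
    tracks_from_projection (N 3 0) a (fun t => f (a t)) va ->
    tracks_from_projection (N 3 0) b (fun t => f (b t)) vb -> va <= V \/ vb <= V.
Proof.
  intros Ma Mb Ga Gb Hne.
  set (D := d (b 0) (a 0)); assert (HD : 0 <= D) by apply dist_ge0.
  pose proof (near_segment_bound_ge0 D HD) as HM.
  pose proof (near_ray_bound_ge0 D (N 3 0) HD ltac:(apply N_gauge; lra)) as HM'.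
  pose proof (N_gauge 3 0 ltac:(lra) (Rle_refl 0)) as HK.
  destruct (far_point_of_not_ray_equiv N a b Mb Ga Gb Hne (3 * near_segment_bound D))
    as [t0 [Ht0 Hfar]].
  exists (tracking_bound D t0); intros f fi va vb Hf Hta Htb.
  destruct (Rle_dec va (tracking_bound D t0)); [left; auto|].
  destruct (Rle_dec vb (tracking_bound D t0)); [right; auto|].
  unfold tracking_bound in *; exfalso.
  destruct (geodesic_segment_exists X_geodesic (a 0) (f (a 0))) as [sig [S0 [SL Hsig]]].
  set (Ls := d (a 0) (f (a 0))) in SL, Hsig.
  destruct (ray_near_segment_before_tracking b (fun t => f (b t)) sig Ls vb D t0 Mb
    (N_Morse_ray_isometry N b f fi Hf Mb) Gb (geodesic_ray_isometry b f fi Hf Gb) Htb Hsig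
    ltac:(rewrite S0; apply Rle_refl) ltac:(rewrite SL, (isometry_dist _ _ _ _ Hf); apply Rle_refl)
    Ht0 ltac:(lra)) as [psi [Hpsi Hdpsi]].
  assert (Hpsi_le : psi <= D + t0 + near_segment_bound D).
  { pose proof (dist_triangle4 (sig 0) (b 0) (b t0) (sig psi)) as T.
    rewrite (proj2 Hsig), Gb, S0, (dist_sym (a 0)) in T by lra.
    fold D in T; Rabs_cases; lra. }
  destruct (ray_near_segment_before_tracking a (fun t => f (a t)) sig Ls va D psi Ma
    (N_Morse_ray_isometry N a f fi Hf Ma) Ga (geodesic_ray_isometry a f fi Hf Ga) Hta Hsig
    ltac:(rewrite S0, dist_refl; auto) ltac:(rewrite SL, dist_refl; auto)
    ltac:(lra) ltac:(lra)) as [phi [Hphi Hdphi]].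
  assert (Hphi_psi : Rabs (psi - phi) <= near_segment_bound D).
  { assert (Ephi : d (a 0) (sig phi) = phi)
      by (rewrite <- S0, (proj2 Hsig) by lra; Rabs_cases; lra).
    pose proof (dist_triangle (a 0) (a psi) (sig phi)) as T1.
    pose proof (dist_triangle (a 0) (sig phi) (a psi)) as T2.
    rewrite Ga in T1, T2 by lra; rewrite (dist_sym (sig phi)) in T2; Rabs_cases; lra. }
  pose proof (dist_triangle4 (b t0) (sig psi) (sig phi) (a psi)) as T.
  rewrite (proj2 Hsig), (dist_sym (sig phi)) in T by lra.
  specialize (Hfar psi ltac:(lra)); lra.
Qed.

Lemma pair_displacement_bounded (a b : R -> X) :
  N_Morse_ray d N a -> N_Morse_ray d N b -> geodesic_ray d a -> geodesic_ray d b ->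
  ~ ray_equiv d a b -> forall V,
  exists Bd, forall f fi va vb, isometry d f fi ->
    tracks_from_projection (N 3 0) a (fun t => f (a t)) va ->
    tracks_from_projection (N 3 0) b (fun t => f (b t)) vb ->
    va <= V -> vb <= V -> d (f (b 0)) (b 0) <= Bd.
Proof.
  intros Ma Mb Ga Gb Hne V.
  set (D := d (b 0) (a 0)); set (K := N 3 0); set (J := 2 * K + 2 * V + D).
  destruct (far_point_of_not_ray_equiv N a b Mb Ga Gb Hne (N 1 (D + J + 2))) as [t1 [Ht1 Hfar]].
  exists (t1 + K + V); intros f fi va vb Hf [Hva [_ Htra]] [Hvb [_ Htrb]] HvaV HvbV.
  destruct (Htra va (Rle_refl va)) as [ta [Hta Hdta]].
  destruct (Htrb vb (Rle_refl vb)) as [tb [Htb Hdtb]].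
  assert (HJ : d (f (b tb)) (f (a ta)) <= J).
  { pose proof (dist_triangle4 (f (b tb)) (b vb) (b 0) (a 0)).
    pose proof (dist_triangle4 (f (b tb)) (a 0) (a va) (f (a ta))).
    rewrite Gb, (dist_sym (f (b tb)) (b vb)) in H by lra; rewrite Ga in H0 by lra.
    unfold J, D; Rabs_cases; lra. }
  destruct (Rlt_dec tb t1) as [Hlt | Hge].
  - pose proof (dist_triangle4 (f (b 0)) (f (b tb)) (b vb) (b 0)).
    rewrite (isometry_dist _ _ _ _ Hf), Gb, Gb, (dist_sym (f (b tb))) in H by lra.
    Rabs_cases; lra.
  - exfalso.
    destruct (segment_near_Morse_ray N (fun t => f (b t)) (fun t => f (a t)) tb D J ta
      (N_Morse_ray_isometry N a f fi Hf Ma)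
      (geodesic_ray_segment_from0 _ tb (geodesic_ray_isometry b f fi Hf Gb) Htb) Hta
      ltac:(cbv beta; rewrite (isometry_dist _ _ _ _ Hf), dist_sym; apply Rle_refl) HJ t1
      ltac:(lra)) as [w [Hw Hd]].
    cbv beta in Hd; rewrite (isometry_dist _ _ _ _ Hf) in Hd; specialize (Hfar w Hw); lra.
Qed.

Lemma three_fixed_points_bounded_displacement (a b c : R -> X) :
  N_Morse_ray d N a -> N_Morse_ray d N b -> N_Morse_ray d N c ->
  geodesic_ray d a -> geodesic_ray d b -> geodesic_ray d c ->
  ~ ray_equiv d a b -> ~ ray_equiv d a c -> ~ ray_equiv d b c ->
  exists Rb, forall f fi, isometry d f fi -> ray_equiv d (fun t => f (a t)) a ->
    ray_equiv d (fun t => f (b t)) b -> ray_equiv d (fun t => f (c t)) c ->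
    d (f (a 0)) (a 0) <= Rb.
Proof.
  intros Ma Mb Mc Ga Gb Gc Nab Nac Nbc.
  destruct (pair_tracking_start_bounded a b Ma Mb Ga Gb Nab) as [Vab Qab].
  destruct (pair_tracking_start_bounded a c Ma Mc Ga Gc Nac) as [Vac Qac].
  destruct (pair_tracking_start_bounded b c Mb Mc Gb Gc Nbc) as [Vbc Qbc].
  set (V := Rmax Vab (Rmax Vac Vbc)).
  destruct (Rmax3_ub Vab Vac Vbc) as [HVab [HVac HVbc]]; fold V in HVab, HVac, HVbc.
  destruct (pair_displacement_bounded a b Ma Mb Ga Gb Nab V) as [Bab Pab].
  destruct (pair_displacement_bounded a c Ma Mc Ga Gc Nac V) as [Bac Pac].
  destruct (pair_displacement_bounded b c Mb Mc Gb Gc Nbc V) as [Bbc Pbc].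
  set (Rab := 2 * d (b 0) (a 0) + Bab); set (Rac := 2 * d (c 0) (a 0) + Bac).
  set (Rbc := 2 * d (c 0) (a 0) + Bbc).
  exists (Rmax Rab (Rmax Rac Rbc)); intros f fi Hf Fa Fb Fc.
  destruct (Rmax3_ub Rab Rac Rbc) as [HRab [HRac HRbc]].
  destruct (tracks_from_projection_of_fixed N a f fi Ma Ga Hf Fa) as [va Ta].
  destruct (tracks_from_projection_of_fixed N b f fi Mb Gb Hf Fb) as [vb Tb].
  destruct (tracks_from_projection_of_fixed N c f fi Mc Gc Hf Fc) as [vc Tc].
  pose proof (displacement_transfer f fi (b 0) (a 0) Hf) as Htb.
  pose proof (displacement_transfer f fi (c 0) (a 0) Hf) as Htc.
  destruct (Rle_dec va V) as [Hva|Hva], (Rle_dec vb V) as [Hvb|Hvb].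
  - pose proof (Pab f fi va vb Hf Ta Tb Hva Hvb); unfold Rab in *; lra.
  - assert (Hvc : vc <= V) by (destruct (Qbc f fi vb vc Hf Tb Tc); lra).
    pose proof (Pac f fi va vc Hf Ta Tc Hva Hvc); unfold Rac in *; lra.
  - assert (Hvc : vc <= V) by (destruct (Qac f fi va vc Hf Ta Tc); lra).
    pose proof (Pbc f fi vb vc Hf Tb Tc Hvb Hvc); unfold Rbc in *; lra.
  - destruct (Qab f fi va vb Hf Ta Tb); lra.
Qed.

End MorseGauge.
End Geodesic.

End MetricSpace.

Theorem lemma4p4 (X : Type) (d : X -> X -> R) (g ginv : X -> X) :
  is_metric d -> proper_space d -> geodesic_space d ->
  isometry d g ginv -> infinite_order g ginv ->
  cyclic_acts_properly d g ginv ->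
  forall a1 a2 a3 : R -> X,
    fixes_boundary_point d g a1 ->
    fixes_boundary_point d g a2 ->
    fixes_boundary_point d g a3 ->
    ray_equiv d a1 a2 \/ ray_equiv d a1 a3 \/ ray_equiv d a2 a3.
Proof.
  (* A proper action of <g> alone forbids bounded orbits. *)
  intros Hm Hp Hg Hi _ Hpr a1 a2 a3 [Ha1 F1] [Ha2 F2] [Ha3 F3].
  destruct (Morse_rays_common_gauge X d a1 a2 a3 Ha1 Ha2 Ha3) as [N [HN [M1 [M2 M3]]]].
  apply NNPP; intros Hno.
  destruct (three_fixed_points_bounded_displacement X d Hm Hg N HN a1 a2 a3 M1 M2 M3
    (proj1 Ha1) (proj1 Ha2) (proj1 Ha3) ltac:(tauto) ltac:(tauto) ltac:(tauto)) as [Rb HRb].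
  apply (orbit_unbounded_of_proper_action X d Hm g ginv Hp Hpr (a1 0) Rb); intros k.
  apply (HRb (Nat.iter k g) (Nat.iter k ginv));
    [apply isometry_iter | apply (ray_equiv_iter X d Hm g ginv) ..]; auto.
Qed.
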